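(* Let $\vec I^{\mathcal M}$ be the multipointed $d$-space with underlying space $[0,1]$, set of states $\{0,1\}$, execution paths from $0$ to $1$ exactly the nondecreasing surjective continuous maps $[0,1]\to[0,1]$ (the set $\mathcal M(1,1)$), and no other execution paths. Then the space \[ \mathbb P_{0,1}\vec I^{\mathcal M}=\mathrm{coeq}\big(\mathbb P^{top}_{0,1}\vec I^{\mathcal M}\times\mathcal G(1,1)\rightrightarrows\mathbb P^{top}_{0,1}\vec I^{\mathcal M}\big), \] where the two maps are $(c,\phi)\mapsto c$ and $(c,\phi)\mapsto c\circ\phi$, is not a singleton.
   Context: $\mathbf{Top}$: $\Delta$-generated spaces; $\mathbb P^{top}_{0,1}\vec I^{\mathcal M}\subset\mathbf{TOP}([0,1],[0,1])$ carries the $\Delta$-kelleyfication of the relative compact-open topology, and the coequalizer is taken in $\mathbf{Top}$. $\mathcal G(1,1)$ is the space of nondecreasing homeomorphisms of $[0,1]$. A multipointed $d$-space is a triple $(|X|,X^0,\mathbb P^{top}X)$ of a space, a set of states, and a set of continuous paths $[0,1]\to|X|$ between states, closed under precomposition with elements of $\mathcal G(1,1)$ and under normalized composition. *)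

From HB Require Import structures.
From mathcomp Require Import all_boot all_order all_algebra.
From mathcomp Require Import all_classical all_reals all_analysis.
From Stdlib Require Import Relations.
Set Implicit Arguments. Unset Strict Implicit. Unset Printing Implicit Defensive.
Import Order.TTheory GRing.Theory Num.Theory.
Import numFieldNormedType.Exports.
Local Open Scope classical_set_scope.
Local Open Scope ring_scope.

(* The unit interval [0,1] as a subset of R. Paths [0,1] -> [0,1] are
   represented by functions R -> R; only their values on [0,1] matter. *)
Definition unitI (K : realType) : set K := `[0, 1]%classic.
Arguments unitI K : clear implicits.

(* M(1,1): nondecreasing surjective continuous maps [0,1] -> [0,1]
   (= the execution paths of I^M from 0 to 1). *)
Definition inM (K : realType) (f : K -> K) : Prop :=
  {within unitI K, continuous f} /\
  (forall x y, unitI K x -> unitI K y -> x <= y -> f x <= f y) /\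
  f @` unitI K = unitI K.
Arguments inM : clear implicits.

Definition inG (K : realType) (phi : K -> K) : Prop :=
  inM K phi /\
  exists psi : K -> K,
    {within unitI K, continuous psi} /\
    (forall t, unitI K t -> unitI K (psi t)) /\
    (forall t, unitI K t -> psi (phi t) = t) /\
    (forall t, unitI K t -> phi (psi t) = t).
Arguments inG : clear implicits.

Definition reparam_step (K : realType) (c d : K -> K) : Prop :=
  inM K c /\ inM K d /\
  exists phi, inG K phi /\ (forall t, unitI K t -> d t = c (phi t)).

(* Underlying set of the coequalizer: P^top_{0,1} I^M modulo the equivalence
   relation generated by c ~ c o phi. *)
Definition coeq_rel (K : realType) : relation (K -> K) :=
  clos_refl_sym_trans (K -> K) (@reparam_step K).
Arguments coeq_rel : clear implicits.

(* Injectivity on [0,1] is invariant under reparametrization by elements of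
   G(1,1), hence constant on equivalence classes of the coequalizer. The
   identity is injective, while the execution path t |-> max(0, 2t - 1)
   collapses [0, 1/2] to the point 0, so the two lie in different classes. *)
From HB Require Import structures.
From mathcomp Require Import all_boot all_order all_algebra.
From mathcomp Require Import all_classical all_reals all_analysis.
From Stdlib Require Import Relations.
From mathcomp Require Import lra.
Import Order.TTheory GRing.Theory Num.Theory.
Import numFieldNormedType.Exports.
Local Open Scope classical_set_scope.
Local Open Scope ring_scope.

Section Reparametrization.
Variable R : realType.

Lemma inM_unitI (f : R -> R) t : inM R f -> unitI R t -> unitI R (f t).
Proof. by move=> [_ [_ im]] It; rewrite -im; exists t. Qed.

Lemma inG_inj_comp (c phi : R -> R) :
  inG R phi -> {in unitI R &, injective c} <-> {in unitI R &, injective (c \o phi)}.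
Proof.
move=> [phiM [psi [_ [psiI [psiK phiK]]]]].
have phiI t : unitI R t -> unitI R (phi t) by exact: inM_unitI.
split=> cinj x y; rewrite !in_setE => Ix Iy.
- by move=> /cinj e; rewrite -(psiK x Ix) -(psiK y Iy) e // in_setE; exact: phiI.
- move=> e; rewrite -(phiK x Ix) -(phiK y Iy); congr phi.
  by apply: cinj; rewrite ?in_setE /= ?phiK //; exact: psiI.
Qed.

Lemma reparam_step_inj (c d : R -> R) : reparam_step c d ->
  {in unitI R &, injective c} <-> {in unitI R &, injective d}.
Proof.
move=> [_ [_ [phi [phiG dE]]]].
rewrite (inG_inj_comp c phi phiG); split=> inj x y Ix Iy; move: (Ix) (Iy).
- by rewrite !in_setE => /dE -> /dE ->; exact: inj.
- by rewrite !in_setE /= => /dE <- /dE <-; exact: inj.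
Qed.

Lemma coeq_rel_inj (c d : R -> R) : coeq_rel R c d ->
  {in unitI R &, injective c} <-> {in unitI R &, injective d}.
Proof. by elim=> [x y /reparam_step_inj|x|x y _|x y z _ + _]; tauto. Qed.

End Reparametrization.

Lemma inM_id (R : realType) : inM R id.
Proof.
split; first by apply: continuous_subspaceT => x.
by split=> //; rewrite image_id.
Qed.

Definition collapse_half (R : realType) : R -> R := (fun=> 0) \max (fun t => 2 * t - 1).

Lemma inM_collapse_half (R : realType) : inM R (@collapse_half R).
Proof.
split; [|split].
- apply: continuous_subspaceT => x; apply: continuous_max; first exact: cst_continuous.
  by apply: cvgB; [apply: cvgM; [exact: cvg_cst|exact: cvg_id]|exact: cvg_cst].
- by move=> x y _ _ xy; apply: le_max2 => //; lra.
- apply/seteqP; split=> y.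
    move=> [x]; rewrite /unitI /= !in_itv /= => /andP[x0 x1] <-.
    rewrite /collapse_half /= le_max lexx /= ge_max ler01 /=; lra.
  rewrite /unitI /= !in_itv /= => /andP[y0 y1].
  exists ((y + 1) / 2); first by rewrite /unitI /= in_itv /=; apply/andP; split; lra.
  by rewrite /collapse_half /= (_ : 2 * ((y + 1) / 2) - 1 = y); [apply/max_idPr|lra].
Qed.

Lemma collapse_half_not_inj (R : realType) :
  ~ {in unitI R &, injective (@collapse_half R)}.
Proof.
have I t : 0 <= t <= 1 -> t \in unitI R by rewrite in_setE /unitI /= in_itv.
have I0 : (0 : R) \in unitI R by apply: I; lra.
have Ihalf : (1 / 2 : R) \in unitI R by apply: I; lra.
move=> /(_ 0 (1 / 2) I0 Ihalf) collapse_inj.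
have : (0 : R) = 1 / 2.
  apply: collapse_inj; rewrite /collapse_half /=.
  by rewrite (max_idPl (_ : 2 * 0 - 1 <= 0)) ?(max_idPl (_ : 2 * (1 / 2) - 1 <= 0)) //; lra.
lra.
Qed.

Theorem proposition3p7 (R : realType) :
  exists c d : R -> R, inM R c /\ inM R d /\ ~ coeq_rel R c d.
Proof.
exists id, (@collapse_half R); split; [exact: inM_id|split; first exact: inM_collapse_half].
move=> /coeq_rel_inj [id_inj_collapse _].
by apply: (@collapse_half_not_inj R); apply: id_inj_collapse => x y.
Qed.
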